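(* Let $E$ and $F$ be Banach lattices and consider the Banach lattice direct sum $E \oplus F$ (ordered coordinatewise), with canonical projections $\pi_E: E \oplus F \to E$ and $\pi_F: E \oplus F \to F$. (1) For nonempty sets $A \subset E$ and $B \subset F$, both $A$ is almost Grothendieck in $E$ and $B$ is almost Grothendieck in $F$ if and only if $A \times B$ is almost Grothendieck in $E \oplus F$. (2) If $C \subset E \oplus F$ is almost Grothendieck, then $\pi_E(C)$ and $\pi_F(C)$ are almost Grothendieck in $E$ and $F$, respectively.
   Context: For a Banach lattice $G$, every bounded linear operator $T: G \to c_0$ has the form $T(x) = (x_n'(x))_n$ for a unique weak* null sequence $(x_n') \subset G'$; $T$ is a disjoint operator if $(x_n')$ is disjoint in the dual Banach lattice $G'$. A subset $A \subset G$ is almost Grothendieck if $T(A)$ is relatively weakly compact in $c_0$ for every disjoint operator $T: G \to c_0$. *)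

From HB Require Import structures.
From mathcomp Require Import all_boot all_order all_algebra.
From mathcomp Require Import all_classical all_reals all_analysis.
Import Order.TTheory GRing.Theory Num.Theory.
Import numFieldNormedType.Exports.

Set Implicit Arguments.
Unset Strict Implicit.
Unset Printing Implicit Defensive.

Local Open Scope classical_set_scope.
Local Open Scope ring_scope.

(* A lattice structure on a real normed space V making it a normed
   vector (Riesz) lattice: a partial order compatible with the linear
   structure, binary suprema [join], and a lattice norm
   (|x| <= |y| -> ||x|| <= ||y||, with |x| := x \/ -x). *)
Record NVL (R : realType) (V : normedModType R) := {
  le : V -> V -> Prop;
  join : V -> V -> V;
  le_refl : forall x, le x x;
  le_trans : forall x y z, le x y -> le y z -> le x z;
  le_anti : forall x y, le x y -> le y x -> x = y;
  le_add : forall x y z, le x y -> le (x + z) (y + z);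
  le_scale : forall (a : R) x y, 0 <= a -> le x y -> le (a *: x) (a *: y);
  join_l : forall x y, le x (join x y);
  join_r : forall x y, le y (join x y);
  join_lub : forall x y z, le x z -> le y z -> le (join x y) z;
  norm_mono : forall x y, le (join x (- x)) (join y (- y)) -> `|x| <= `|y|
}.

Definition labs (R : realType) (V : normedModType R) (L : NVL V) (x : V) : V :=
  join L x (- x).

(* The norm on E * F is MathComp-Analysis' product norm
   ||(x,y)|| = max(||x||, ||y||), a lattice norm. *)
Section DirectSum.
Variables (R : realType) (E F : normedModType R) (LE : NVL E) (LF : NVL F).

Definition sum_le (p q : E * F) : Prop := le LE p.1 q.1 /\ le LF p.2 q.2.
Definition sum_join (p q : E * F) : E * F := (join LE p.1 q.1, join LF p.2 q.2).

Lemma sum_le_refl x : sum_le x x.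
Proof. by split; apply: le_refl. Qed.

Lemma sum_le_trans x y z : sum_le x y -> sum_le y z -> sum_le x z.
Proof. by move=> [? ?] [? ?]; split; apply: le_trans; eassumption. Qed.

Lemma sum_le_anti x y : sum_le x y -> sum_le y x -> x = y.
Proof.
case: x => x1 x2; case: y => y1 y2 [/= h1 h2] [/= h3 h4].
by rewrite (le_anti h1 h3) (le_anti h2 h4).
Qed.

Lemma sum_le_add x y z : sum_le x y -> sum_le (x + z) (y + z).
Proof. by move=> [? ?]; split; apply: le_add. Qed.

Lemma sum_le_scale (a : R) x y : 0 <= a -> sum_le x y -> sum_le (a *: x) (a *: y).
Proof. by move=> a0 [? ?]; split; apply: le_scale. Qed.

Lemma sum_join_l x y : sum_le x (sum_join x y).
Proof. by split; apply: join_l. Qed.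

Lemma sum_join_r x y : sum_le y (sum_join x y).
Proof. by split; apply: join_r. Qed.

Lemma sum_join_lub x y z : sum_le x z -> sum_le y z -> sum_le (sum_join x y) z.
Proof. by move=> [? ?] [? ?]; split; apply: join_lub. Qed.

Lemma sum_norm_mono x y :
  sum_le (sum_join x (- x)) (sum_join y (- y)) -> `|x| <= `|y|.
Proof.
move=> [/= h1 h2]; rewrite !prod_normE /=.
have n1 := norm_mono h1; have n2 := norm_mono h2.
rewrite ge_max !le_max.
by rewrite n1 n2 orbT.
Qed.

Definition sumNVL : NVL (E * F)%type :=
  Build_NVL sum_le_refl sum_le_trans sum_le_anti sum_le_add sum_le_scale
    sum_join_l sum_join_r sum_join_lub sum_norm_mono.

End DirectSum.

Section Dual.
Variables (R : realType) (G : normedModType R) (L : NVL G).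

Definition dual_elem (f : G -> R) : Prop :=
  (forall (a : R) (x y : G), f (a *: x + y) = a * f x + f y) /\ continuous f.

(* modulus |f| of f in G', on the positive cone (Riesz-Kantorovich):
   |f|(y) = sup { |f z| : |z| <= y }  for y >= 0 *)
Definition dual_abs (f : G -> R) (y : G) : R :=
  sup [set `|f z| | z in [set z | le L (labs L z) y]].

(* f and g are disjoint in the dual lattice G', i.e. |f| /\ |g| = 0,
   where (|f| /\ |g|)(x) = inf { |f|(y) + |g|(x - y) : 0 <= y <= x }
   for x >= 0 (Riesz-Kantorovich formula for the lattice operations of G') *)
Definition dual_disjoint (f g : G -> R) : Prop :=
  forall x : G, le L 0 x ->
    inf [set dual_abs f y + dual_abs g (x - y) |
          y in [set y | le L 0 y /\ le L y x]] = 0.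

(* A sequence (x_n') in G' that is weak* null and disjoint in G';
   these are exactly the data of the disjoint operators
   T : G -> c_0,  T x = (x_n'(x))_n. *)
Definition disjoint_weakstar_null (f : nat -> G -> R) : Prop :=
  [/\ (forall n, dual_elem (f n)),
      (forall x, (fun n => f n x) @ \oo --> (0 : R)) &
      (forall n m, n <> m -> dual_disjoint (f n) (f m))].

End Dual.

Record c0 (R : realType) := C0 {
  c0seq : nat -> R;
  c0seq_null : c0seq @ \oo --> (0 : R)
}.

HB.instance Definition _ (R : realType) := gen_eqMixin (c0 R).
HB.instance Definition _ (R : realType) := gen_choiceMixin (c0 R).

(* continuous linear functionals on c_0 with its sup norm
   ||u|| = sup_n |u_n| (boundedness written out: |phi u| <= M c
   whenever |u_n| <= c for all n) *)
Record c0dual (R : realType) := C0dual {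
  c0fun : c0 R -> R;
  c0fun_add : forall u v w : c0 R,
    c0seq w = (fun n => c0seq u n + c0seq v n) -> c0fun w = c0fun u + c0fun v;
  c0fun_scale : forall (a : R) (u w : c0 R),
    c0seq w = (fun n => a * c0seq u n) -> c0fun w = a * c0fun u;
  c0fun_bounded : exists M : R, forall (u : c0 R) (c : R),
    (forall n, `|c0seq u n| <= c) -> `|c0fun u| <= M * c
}.

(* the weak topology sigma(c_0, c_0'): initial topology of the
   evaluation map into the product (pointwise) topology on R^(c_0') *)
Definition c0_eval (R : realType) (u : c0 R) : {ptws c0dual R -> R} :=
  fun phi => c0fun phi u.

Definition c0_weak (R : realType) := initial_topology (@c0_eval R).

Definition rel_weakly_compact (R : realType) (S : set (c0 R)) : Prop :=
  compact (@closure (c0_weak R) S).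

Definition almost_grothendieck (R : realType) (G : normedModType R)
    (L : NVL G) (A : set G) : Prop :=
  forall f : nat -> G -> R, disjoint_weakstar_null L f ->
    rel_weakly_compact [set u : c0 R | exists2 x, A x & c0seq u = (fun n => f n x)].

From Pilot Require Import Defs.
From HB Require Import structures.
From mathcomp Require Import all_boot all_order all_algebra.
From mathcomp Require Import all_classical all_reals all_analysis.
Import Order.TTheory GRing.Theory Num.Theory.
Import numFieldNormedType.Exports.

Set Implicit Arguments.
Unset Strict Implicit.
Unset Printing Implicit Defensive.

Local Open Scope classical_set_scope.
Local Open Scope ring_scope.

(* Disjoint weak*-null sequences move between E, F and E (+) F: composing with
   the coordinate projections sends those of E and F to those of E (+) F, and
   restricting along the coordinate inclusions sends those of E (+) F back,
   because the moduli and infima defining disjointness are computed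
   coordinatewise.  This gives (2) and the converse half of (1), as A and B are
   the projections of A x B when both are nonempty.  For the direct half, a
   disjoint operator T on E (+) F splits as T(x, y) = T(x, 0) + T(0, y), so
   T(A x B) lies in the sum of two relatively weakly compact subsets of c_0,
   and such a sum is relatively weakly compact because addition is weakly
   continuous and weakly compact sets are closed. *)

(* The product topology on R^(c_0') needs an eqType of indices. *)
HB.instance Definition _ (R : realType) := gen_eqMixin (c0dual R).

Section C0Weak.
Variable R : realType.

Lemma c0seq_inj : injective (@c0seq R).
Proof.
case=> su pu [sv pv] /= esv; subst sv.
by congr C0; exact: Prop_irrelevance.
Qed.

Lemma c0fun_continuous (phi : c0dual R) : continuous (c0fun phi : c0_weak R -> R).
Proof.
move=> u; apply: (@continuous_comp (c0_weak R) {ptws c0dual R -> R} R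
  (@c0_eval R) (proj phi)).
  exact: initial_continuous.
exact: proj_continuous.
Qed.

Lemma continuous_c0_weak (X : topologicalType) (g : X -> c0_weak R) :
  (forall phi, continuous (c0fun phi \o g)) -> continuous g.
Proof.
move=> gphi; apply: continuous_comp_initial => x; apply/cvg_sup => phi.
suff : continuous (@c0_eval R \o g :
    X -> initial_topology (fun f : c0dual R -> R => f phi)).
  exact.
by apply: continuous_comp_initial; exact: gphi.
Qed.

Definition c0_coord (k : nat) : c0dual R.
Proof.
refine (@C0dual R (fun u => c0seq u k) _ _ _).
- by move=> u v w ->.
- by move=> a u w ->.
- by exists 1 => u c uc; rewrite mul1r.
Defined.

Lemma c0_weak_hausdorff : hausdorff_space (c0_weak R).
Proof.
move=> u v cluv; apply: c0seq_inj; apply: funext => k.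
apply: Rhausdorff => A B uA vB.
have coord_k_cont := @c0fun_continuous (c0_coord k).
have [w [Aw Bw]] := cluv _ _ (coord_k_cont u _ uA) (coord_k_cont v _ vB).
by exists (c0seq w k).
Qed.

Lemma c0_add_null (u v : c0 R) : (fun n => c0seq u n + c0seq v n) @ \oo --> (0 : R).
Proof.
by rewrite -[X in _ --> X](addr0 0); exact: cvgD (c0seq_null u) (c0seq_null v).
Qed.

Definition c0_add (u v : c0 R) : c0 R := C0 (c0_add_null u v).

Lemma c0_add_continuous :
  continuous (fun uv : c0_weak R * c0_weak R => (c0_add uv.1 uv.2 : c0_weak R)).
Proof.
apply: continuous_c0_weak => phi.
have -> : c0fun phi \o (fun uv : c0_weak R * c0_weak R => c0_add uv.1 uv.2) =
          (fun uv => c0fun phi uv.1 + c0fun phi uv.2).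
  by apply: funext => uv; exact: c0fun_add.
move=> uv; apply: cvgD.
- exact: (continuous_comp cvg_fst (@c0fun_continuous phi _)).
- exact: (continuous_comp cvg_snd (@c0fun_continuous phi _)).
Qed.

Lemma rel_weakly_compact_sub_add (S S1 S2 : set (c0 R)) :
  rel_weakly_compact S1 -> rel_weakly_compact S2 ->
  S `<=` [set c0_add u v | u in S1 & v in S2] -> rel_weakly_compact S.
Proof.
rewrite /rel_weakly_compact => cS1 cS2 S_sum.
pose K : set (c0_weak R) := [set c0_add uv.1 uv.2 | uv in
  @closure (c0_weak R) S1 `*` @closure (c0_weak R) S2].
have cK : compact K.
  apply: continuous_compact; last exact: compact_setX.
  by apply: continuous_subspaceT; exact: c0_add_continuous.
apply: (subclosed_compact (@closed_closure (c0_weak R) S) cK).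
have -> : K = closure K by apply/closure_id; exact: compact_closed c0_weak_hausdorff cK.
apply: closureS => w /S_sum [u S1u [v S2v <-]].
by exists (u, v); split; exact: subset_closure.
Qed.

End C0Weak.

Section LatticeFacts.
Variables (R : realType) (G : normedModType R) (L : NVL G).

Lemma labs0 : labs L 0 = 0.
Proof.
rewrite /labs oppr0; apply: Defs.le_anti; last exact: Defs.join_l.
by apply: Defs.join_lub; exact: Defs.le_refl.
Qed.

Lemma labs_le0 (z : G) : le L (labs L z) 0 -> z = 0.
Proof.
move=> z0; have zle0 := Defs.le_trans (Defs.join_l L z (- z)) z0.
have := Defs.le_add z (Defs.le_trans (Defs.join_r L z (- z)) z0); rewrite addNr add0r.
exact: Defs.le_anti zle0.
Qed.

Lemma le_subr_ge0 (x y : G) : le L y x -> le L 0 (x - y).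
Proof. by move/(Defs.le_add (- y)); rewrite subrr. Qed.

End LatticeFacts.

Section DualDirectSum.
Variables (R : realType) (E F : normedModType R) (LE : NVL E) (LF : NVL F).
Local Notation LS := (sumNVL LE LF).

Lemma dual_abs_fst (f : E -> R) (y : E * F) : le LF 0 y.2 ->
  dual_abs LS (f \o fst) y = dual_abs LE f y.1.
Proof.
move=> y2_ge0; congr sup; apply/seteqP; split.
- by move=> r [z [zy1 _] <-]; exists z.1.
- move=> r [z zy1 <-]; exists (z, 0) => //; split => //=.
  by rewrite -[join _ 0 _]/(labs _ 0) labs0.
Qed.

Lemma dual_abs_snd (f : F -> R) (y : E * F) : le LE 0 y.1 ->
  dual_abs LS (f \o snd) y = dual_abs LF f y.2.
Proof.
move=> y1_ge0; congr sup; apply/seteqP; split.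
- by move=> r [z [_ zy2] <-]; exists z.2.
- move=> r [z zy2 <-]; exists (0, z) => //; split => //=.
  by rewrite -[join _ 0 _]/(labs _ 0) labs0.
Qed.

Lemma dual_abs_inl (g : E * F -> R) (y : E) :
  dual_abs LS g (y, 0) = dual_abs LE (fun x => g (x, 0)) y.
Proof.
congr sup; apply/seteqP; split.
- move=> r [[z1 z2] [/= z1y z2_le0] <-]; exists z1 => //.
  by rewrite (labs_le0 z2_le0).
- move=> r [z zy <-]; exists (z, 0) => //; split => //=.
  by rewrite -[join _ 0 _]/(labs _ 0) labs0; exact: Defs.le_refl.
Qed.

Lemma dual_abs_inr (g : E * F -> R) (y : F) :
  dual_abs LS g (0, y) = dual_abs LF (fun x => g (0, x)) y.
Proof.
congr sup; apply/seteqP; split.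
- move=> r [[z1 z2] [/= z1_le0 z2y] <-]; exists z2 => //.
  by rewrite (labs_le0 z1_le0).
- move=> r [z zy <-]; exists (0, z) => //; split => //=.
  by rewrite -[join _ 0 _]/(labs _ 0) labs0; exact: Defs.le_refl.
Qed.

Lemma dual_disjoint_fst (f f' : E -> R) : dual_disjoint LE f f' ->
  dual_disjoint LS (f \o fst) (f' \o fst).
Proof.
move=> ff' [x1 x2] [/= x1_ge0 x2_ge0]; rewrite -(ff' x1 x1_ge0).
congr inf; apply/seteqP; split.
- move=> r [[y1 y2] [[/= y1_ge0 y2_ge0] [/= y1x1 y2x2]] <-]; exists y1 => //.
  by rewrite !dual_abs_fst //=; apply: le_subr_ge0.
- move=> r [y [y_ge0 yx1] <-]; exists (y, 0).
    by do 2 split => //=; exact: Defs.le_refl.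
  by rewrite !dual_abs_fst //= ?subr0 //; exact: Defs.le_refl.
Qed.

Lemma dual_disjoint_snd (f f' : F -> R) : dual_disjoint LF f f' ->
  dual_disjoint LS (f \o snd) (f' \o snd).
Proof.
move=> ff' [x1 x2] [/= x1_ge0 x2_ge0]; rewrite -(ff' x2 x2_ge0).
congr inf; apply/seteqP; split.
- move=> r [[y1 y2] [[/= y1_ge0 y2_ge0] [/= y1x1 y2x2]] <-]; exists y2 => //.
  by rewrite !dual_abs_snd //=; apply: le_subr_ge0.
- move=> r [y [y_ge0 yx2] <-]; exists (0, y).
    by do 2 split => //=; exact: Defs.le_refl.
  by rewrite !dual_abs_snd //= ?subr0 //; exact: Defs.le_refl.
Qed.

Lemma dual_disjoint_inl (g g' : E * F -> R) : dual_disjoint LS g g' ->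
  dual_disjoint LE (fun x => g (x, 0)) (fun x => g' (x, 0)).
Proof.
move=> gg' x x_ge0; rewrite -(gg' (x, 0)); last by split => //; exact: Defs.le_refl.
congr inf; apply/seteqP; split.
- move=> r [y [y_ge0 yx] <-]; exists (y, 0).
    by do 2 split => //=; exact: Defs.le_refl.
  by rewrite -[(x, 0) - _]/(x - y, 0 - 0) subr0 !dual_abs_inl.
- move=> r [[y1 y2] [[/= y1_ge0 y2_ge0] [/= y1x y2_le0]] <-].
  have -> : y2 = 0 := Defs.le_anti y2_le0 y2_ge0.
  exists y1 => //.
  by rewrite -[(x, 0) - _]/(x - y1, 0 - 0) subr0 !dual_abs_inl.
Qed.

Lemma dual_disjoint_inr (g g' : E * F -> R) : dual_disjoint LS g g' ->
  dual_disjoint LF (fun x => g (0, x)) (fun x => g' (0, x)).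
Proof.
move=> gg' x x_ge0; rewrite -(gg' (0, x)); last by split => //; exact: Defs.le_refl.
congr inf; apply/seteqP; split.
- move=> r [y [y_ge0 yx] <-]; exists (0, y).
    by do 2 split => //=; exact: Defs.le_refl.
  by rewrite -[(0, x) - _]/(0 - 0, x - y) subr0 !dual_abs_inr.
- move=> r [[y1 y2] [[/= y1_ge0 y2_ge0] [/= y1_le0 y2x]] <-].
  have -> : y1 = 0 := Defs.le_anti y1_le0 y1_ge0.
  exists y2 => //.
  by rewrite -[(0, x) - _]/(0 - 0, x - y2) subr0 !dual_abs_inr.
Qed.

End DualDirectSum.

Section DualComp.
Variables (R : realType) (G H : normedModType R).

Lemma dual_elem_comp (h : G -> H) (g : H -> R) :
  linear h -> continuous h -> dual_elem g -> dual_elem (g \o h).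
Proof.
move=> h_lin h_cont [g_lin g_cont]; split => [a x y | x] /=.
  by rewrite h_lin g_lin.
exact: continuous_comp (h_cont x) (g_cont (h x)).
Qed.

End DualComp.

Section Coordinates.
Variables (R : realType) (E F : normedModType R).

Lemma fst_linear : linear (@fst E F). Proof. by []. Qed.
Lemma snd_linear : linear (@snd E F). Proof. by []. Qed.

Lemma inl_linear : linear (fun x : E => (x, 0 : F)).
Proof. by move=> a x y; rewrite -[RHS]/(a *: x + y, a *: 0 + 0) scaler0 addr0. Qed.

Lemma inr_linear : linear (fun y : F => (0 : E, y)).
Proof. by move=> a x y; rewrite -[RHS]/(a *: 0 + 0, a *: x + y) scaler0 addr0. Qed.

Lemma inl_continuous : continuous (fun x : E => (x, 0 : F)).
Proof. by move=> x; apply: cvg_pair; [exact: cvg_id | exact: cvg_cst]. Qed.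

Lemma inr_continuous : continuous (fun y : F => (0 : E, y)).
Proof. by move=> y; apply: cvg_pair; [exact: cvg_cst | exact: cvg_id]. Qed.

Lemma dual_elem_pairE (g : E * F -> R) (x : E) (y : F) :
  dual_elem g -> g (x, y) = g (x, 0) + g (0, y).
Proof.
case=> g_lin _; rewrite -[g (x, 0)]mul1r -g_lin scale1r.
by rewrite -[(x, 0) + _]/(x + 0, 0 + y) addr0 add0r.
Qed.

End Coordinates.

Section DisjointWeakStarNull.
Variables (R : realType) (E F : normedModType R) (LE : NVL E) (LF : NVL F).
Local Notation LS := (sumNVL LE LF).

Lemma disjoint_weakstar_null_fst (f : nat -> E -> R) :
  disjoint_weakstar_null LE f -> disjoint_weakstar_null LS (fun n => f n \o fst).
Proof.
case=> f_dual f_null f_disj; split => [n | x | n m nm].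
- by apply: dual_elem_comp (@fst_linear R E F) _ (f_dual n) => -[x y]; exact: cvg_fst.
- exact: f_null.
- exact: dual_disjoint_fst (f_disj n m nm).
Qed.

Lemma disjoint_weakstar_null_snd (f : nat -> F -> R) :
  disjoint_weakstar_null LF f -> disjoint_weakstar_null LS (fun n => f n \o snd).
Proof.
case=> f_dual f_null f_disj; split => [n | x | n m nm].
- by apply: dual_elem_comp (@snd_linear R E F) _ (f_dual n) => -[x y]; exact: cvg_snd.
- exact: f_null.
- exact: dual_disjoint_snd (f_disj n m nm).
Qed.

Lemma disjoint_weakstar_null_inl (g : nat -> E * F -> R) :
  disjoint_weakstar_null LS g -> disjoint_weakstar_null LE (fun n x => g n (x, 0)).
Proof.
case=> g_dual g_null g_disj; split => [n | x | n m nm].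
- exact: dual_elem_comp (@inl_linear R E F) (@inl_continuous R E F) (g_dual n).
- exact: g_null.
- exact: dual_disjoint_inl (g_disj n m nm).
Qed.

Lemma disjoint_weakstar_null_inr (g : nat -> E * F -> R) :
  disjoint_weakstar_null LS g -> disjoint_weakstar_null LF (fun n y => g n (0, y)).
Proof.
case=> g_dual g_null g_disj; split => [n | y | n m nm].
- exact: dual_elem_comp (@inr_linear R E F) (@inr_continuous R E F) (g_dual n).
- exact: g_null.
- exact: dual_disjoint_inr (g_disj n m nm).
Qed.

End DisjointWeakStarNull.

Lemma image_fst_setX (T U : Type) (A : set T) (B : set U) :
  B !=set0 -> fst @` (A `*` B) = A.
Proof.
case=> b Bb; apply/seteqP; split => [_ [[x y] [Ax _] <-] // | x Ax].
by exists (x, b).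
Qed.

Lemma image_snd_setX (T U : Type) (A : set T) (B : set U) :
  A !=set0 -> snd @` (A `*` B) = B.
Proof.
case=> a Aa; apply/seteqP; split => [_ [[x y] [_ By] <-] // | y By].
by exists (a, y).
Qed.

Section AlmostGrothendieckSum.
Variables (R : realType) (E F : normedModType R) (LE : NVL E) (LF : NVL F).
Local Notation LS := (sumNVL LE LF).

Lemma almost_grothendieck_fst (C : set (E * F)) :
  almost_grothendieck LS C -> almost_grothendieck LE (fst @` C).
Proof.
move=> C_ag f /(disjoint_weakstar_null_fst LF) /C_ag.
congr rel_weakly_compact; apply/seteqP; split => u.
- by case=> z Cz uz; exists z.1 => //; exists z.
- by case=> _ [z Cz <-] uz; exists z.
Qed.

Lemma almost_grothendieck_snd (C : set (E * F)) :
  almost_grothendieck LS C -> almost_grothendieck LF (snd @` C).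
Proof.
move=> C_ag f /(disjoint_weakstar_null_snd LE) /C_ag.
congr rel_weakly_compact; apply/seteqP; split => u.
- by case=> z Cz uz; exists z.2 => //; exists z.
- by case=> _ [z Cz <-] uz; exists z.
Qed.

Lemma almost_grothendieck_setX (A : set E) (B : set F) :
  almost_grothendieck LE A -> almost_grothendieck LF B ->
  almost_grothendieck LS (A `*` B).
Proof.
move=> A_ag B_ag g g_dwn.
have gl_dwn := disjoint_weakstar_null_inl g_dwn.
have gr_dwn := disjoint_weakstar_null_inr g_dwn.
apply: rel_weakly_compact_sub_add (A_ag _ gl_dwn) (B_ag _ gr_dwn) _.
move=> w [[x y] [/= Ax By] wxy].
have [_ gl_null _] := gl_dwn; have [_ gr_null _] := gr_dwn.
exists (C0 (gl_null x)); first by exists x.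
exists (C0 (gr_null y)); first by exists y.
apply: c0seq_inj; rewrite wxy; apply: funext => n /=.
by have [g_dual _ _] := g_dwn; rewrite [RHS](dual_elem_pairE x y (g_dual n)).
Qed.

End AlmostGrothendieckSum.

Theorem mainTheorem7 (R : realType) (E F : completeNormedModType R)
    (LE : NVL E) (LF : NVL F) :
  (forall (A : set E) (B : set F), A !=set0 -> B !=set0 ->
     (almost_grothendieck LE A /\ almost_grothendieck LF B <->
      almost_grothendieck (sumNVL LE LF) (A `*` B))) /\
  (forall C : set (E * F),
     almost_grothendieck (sumNVL LE LF) C ->
     almost_grothendieck LE (fst @` C) /\ almost_grothendieck LF (snd @` C)).
Proof.
split=> [A B A0 B0 | C C_ag]; last first.
  by split; [exact: (almost_grothendieck_fst C_ag) |
             exact: (almost_grothendieck_snd C_ag)].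
split=> [[A_ag B_ag] | AB_ag]; first exact: almost_grothendieck_setX.
split; first by rewrite -(image_fst_setX A B0); exact: (almost_grothendieck_fst AB_ag).
by rewrite -(image_snd_setX B A0); exact: (almost_grothendieck_snd AB_ag).
Qed.
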